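(* Let $0\le x<1$, $0<\beta<1$ and $\frac{(1+\beta)^2x}{4\beta}>1$. Then $$\lim_{t\to\infty}\frac{\beta}{(1+\beta)\sqrt{1-x}}\left({}_2F_1\!\left(\begin{matrix}1,(1+\beta)t\\ t+1\end{matrix};\tfrac12-\tfrac12\sqrt{1-x}\right)-{}_2F_1\!\left(\begin{matrix}1,(1+\beta)t\\ t+1\end{matrix};\tfrac12+\tfrac12\sqrt{1-x}\right)\right)=-\frac{1}{\frac{(1+\beta)^2}{4\beta}x-1},$$ uniformly on compact subsets of this region.
   Context: ${}_2F_1\!\left(\begin{matrix}a,b\\ d\end{matrix};x\right)=\sum_{n\ge0}\frac{(a)_n(b)_n}{(d)_n}\frac{x^n}{n!}$ for $|x|<1$, with $(q)_0=1$, $(q)_n=q(q+1)\cdots(q+n-1)$; $t>0$ is a real parameter tending to $\infty$. *)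

From mathcomp Require Import all_boot all_order all_algebra.
From mathcomp Require Import all_classical all_reals all_analysis.
Set Implicit Arguments. Unset Strict Implicit. Unset Printing Implicit Defensive.
Import Order.TTheory GRing.Theory Num.Theory.
Local Open Scope ring_scope.

Definition poch {R : realType} (q : R) (n : nat) : R :=
  \prod_(i < n) (q + i%:R).

(* Gauss hypergeometric function 2F1(a,b;d;x) as the sum of its power series
   (used only for |x| < 1, where it converges). *)
Definition hyp2F1 {R : realType} (a b d x : R) : R :=
  limn (fun N : nat => \sum_(0 <= n < N)
          (poch a n * poch b n / poch d n * x ^+ n / (n`!)%:R)).

From mathcomp Require Import all_boot all_order all_algebra.
From mathcomp Require Import all_classical all_reals all_analysis.
From mathcomp Require Import ring lra.
Import Order.TTheory GRing.Theory Num.Theory numFieldNormedType.Exports.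
Local Open Scope ring_scope.
Local Open Scope classical_set_scope.

(* For b >= 1, z >= 0 and q := b z < 1, the partial sums S_N of
   F(z) = 2F1(1, b t; t + 1; z) satisfy t (S_(N+1) - 1 - q S_N) = z W_N - W_(N+1),
   where W_N is the partial sum of the series weighted by n.  Since
   0 <= z W_N <= W_(N+1) <= sum n q^n <= (1 - q)^-2, letting N -> oo gives
   |(1 - q) F(z) - 1| <= ((1 - q)^2 t)^-1, i.e. F(z) = 1/(1 - q) + O(1/t).
   At z = (1 -+ sqrt(1 - x))/2 the two numbers 1 - (1 + beta) z have sum
   1 - beta < 1 and product (1 + beta)^2 x / 4 - beta > 0, so both are bounded
   below by that product, and the difference of the two approximations
   1/(1 - (1 + beta) z) is exactly the limit.  On a compact subset of the region, 1 - x and the product are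
   bounded away from 0, which makes the O(1/t) uniform. *)

Section Pochhammer.
Context {R : realType}.

Lemma poch0 (q : R) : poch q 0 = 1.
Proof. by rewrite /poch big_ord0. Qed.

Lemma pochS (q : R) n : poch q n.+1 = poch q n * (q + n%:R).
Proof. by rewrite /poch big_ord_recr. Qed.

Lemma poch1 n : poch (1 : R) n = n`!%:R.
Proof.
elim: n => [|n IHn]; first by rewrite poch0.
by rewrite pochS IHn factS natrM mulrC -natr1 addrC.
Qed.

Lemma poch_gt0 (q : R) n : 0 < q -> 0 < poch q n.
Proof.
move=> q_gt0; elim: n => [|n IHn]; first by rewrite poch0.
by rewrite pochS mulr_gt0 // ltr_wpDr.
Qed.

End Pochhammer.

Section GeometricSums.
Context {R : realType}.

Lemma geometric_sumE (q : R) N :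
  (1 - q) * \sum_(0 <= n < N) q ^+ n = 1 - q ^+ N.
Proof.
elim: N => [|N IHN]; first by rewrite big_geq // expr0; ring.
by rewrite big_nat_recr //= mulrDr IHN exprS; ring.
Qed.

Lemma weighted_geometric_sumE (q : R) N :
  (1 - q) ^+ 2 * \sum_(0 <= n < N) n%:R * q ^+ n
  = q - N%:R * q ^+ N + (N%:R - 1) * q ^+ N.+1.
Proof.
elim: N => [|N IHN]; first by rewrite big_geq // expr0 expr1; ring.
by rewrite big_nat_recr //= mulrDr IHN !exprS -natr1; ring.
Qed.

Lemma geometric_sum_le (q : R) N : 0 <= q < 1 ->
  \sum_(0 <= n < N) q ^+ n <= (1 - q)^-1.
Proof.
case/andP=> q_ge0 q_lt1; have q'_gt0 : 0 < 1 - q by lra.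
rewrite -(ler_pM2l q'_gt0) mulfV ?gt_eqF // geometric_sumE.
by have := exprn_ge0 N q_ge0; lra.
Qed.

Lemma weighted_geometric_sum_le (q : R) N : 0 <= q < 1 ->
  \sum_(0 <= n < N) n%:R * q ^+ n <= ((1 - q) ^+ 2)^-1.
Proof.
case/andP=> q_ge0 q_lt1; have q'_gt0 : 0 < (1 - q) ^+ 2 by rewrite exprn_gt0 //; lra.
rewrite -(ler_pM2l q'_gt0) mulfV ?gt_eqF // weighted_geometric_sumE exprS.
have : 0 <= q ^+ N * (N%:R * (1 - q)) by rewrite !mulr_ge0 ?exprn_ge0 //; lra.
have := exprn_ge0 N q_ge0; nra.
Qed.

End GeometricSums.

Section HypergeometricApprox.
Context {R : realType}.
Variables b t z : R.
Hypotheses (t_gt0 : 0 < t) (b_ge1 : 1 <= b) (z_ge0 : 0 <= z).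

Let b_ge0 : 0 <= b. Proof. exact: le_trans ler01 b_ge1. Qed.
Let den_gt0 n : 0 < t + 1 + n%:R. Proof. by rewrite !ltr_wpDr. Qed.
Let poch_neq0 n : poch (t + 1) n != 0.
Proof. by rewrite gt_eqF // poch_gt0 // ltr_wpDr. Qed.

Definition hypterm n := poch (b * t) n / poch (t + 1) n * z ^+ n.
Definition hypsum N := \sum_(0 <= n < N) hypterm n.
Definition hypwsum N := \sum_(0 <= n < N) n%:R * hypterm n.

Lemma hyp2F1_1E : hyp2F1 1 (b * t) (t + 1) z = limn hypsum.
Proof.
rewrite /hyp2F1; congr (limn _); apply: funext => N.
apply: eq_bigr => n _; rewrite poch1 /hypterm.
have fact_neq0 : n`!%:R != 0 :> R by rewrite pnatr_eq0 -lt0n fact_gt0.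
by field; rewrite fact_neq0 poch_neq0.
Qed.

Lemma hypterm0 : hypterm 0 = 1.
Proof. by rewrite /hypterm !poch0 expr0 divr1 mulr1. Qed.

Lemma hyptermS n :
  hypterm n.+1 = hypterm n * ((b * t + n%:R) * z / (t + 1 + n%:R)).
Proof.
rewrite /hypterm !pochS exprS.
by field; rewrite poch_neq0 gt_eqF ?den_gt0.
Qed.

Lemma hypterm_ge0_le n : 0 <= hypterm n <= (b * z) ^+ n.
Proof.
elim: n => [|n /andP[a_ge0 a_le]]; first by rewrite hypterm0 expr0 lexx ler01.
have n_ge0 : 0 <= n%:R :> R by [].
have bt_ge0 : 0 <= b * t by rewrite mulr_ge0 // ltW.
have ratio_ge0 : 0 <= (b * t + n%:R) * z / (t + 1 + n%:R).
  by rewrite divr_ge0 ?mulr_ge0 ?addr_ge0 // ltW ?den_gt0.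
have ratio_le : (b * t + n%:R) * z / (t + 1 + n%:R) <= b * z.
  rewrite ler_pdivrMr ?den_gt0 //.
  have b1z_ge0 : 0 <= (b - 1) * z by rewrite mulr_ge0 // subr_ge0.
  have := mulr_ge0 b1z_ge0 n_ge0; have := mulr_ge0 b_ge0 z_ge0; nra.
rewrite hyptermS exprS mulr_ge0 //= mulrC ler_pM //.
Qed.

Lemma hypsum_recurrence N :
  t * (hypsum N.+1 - 1 - b * z * hypsum N) = z * hypwsum N - hypwsum N.+1.
Proof.
elim: N => [|N IHN]; first by rewrite /hypsum /hypwsum !big_nat1 !big_geq // hypterm0; ring.
have -> : t * (hypsum N.+2 - 1 - b * z * hypsum N.+1) =
    t * (hypsum N.+1 - 1 - b * z * hypsum N) + t * (hypterm N.+1 - b * z * hypterm N).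
  by rewrite /hypsum (big_nat_recr N.+1) // (big_nat_recr N) //=; ring.
rewrite IHN /hypwsum (big_nat_recr N.+1) // (big_nat_recr N) //= hyptermS -natr1.
by field; rewrite gt_eqF ?den_gt0.
Qed.

Hypothesis bz_lt1 : b * z < 1.

Let q_ge0 : 0 <= b * z. Proof. exact: mulr_ge0. Qed.
Let q_range : 0 <= b * z < 1. Proof. by rewrite q_ge0 bz_lt1. Qed.

Lemma hypsum_cvg : cvgn hypsum.
Proof.
apply: nondecreasing_is_cvgn.
  apply/nondecreasing_seqP => n; rewrite /hypsum big_nat_recr //= lerDl.
  by case/andP: (hypterm_ge0_le n).
exists (1 - b * z)^-1 => _ [n _ <-].
apply: le_trans (geometric_sum_le _ n q_range); rewrite /hypsum; apply: ler_sum => i _.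
by case/andP: (hypterm_ge0_le i).
Qed.

Lemma hypsum_step_near N :
  `|hypsum N.+1 - b * z * hypsum N - 1| <= ((1 - b * z) ^+ 2 * t)^-1.
Proof.
have hypwsumS : hypwsum N <= hypwsum N.+1.
  by rewrite /hypwsum big_nat_recr //= lerDl mulr_ge0 //; case/andP: (hypterm_ge0_le N).
have hypwsum_ge0 : 0 <= hypwsum N.
  by rewrite sumr_ge0 // => i _; rewrite mulr_ge0 //; case/andP: (hypterm_ge0_le i).
have hypwsum_le : hypwsum N.+1 <= ((1 - b * z) ^+ 2)^-1.
  apply: le_trans (weighted_geometric_sum_le _ N.+1 q_range).
  rewrite /hypwsum; apply: ler_sum => i _.
  by rewrite ler_wpM2l //; case/andP: (hypterm_ge0_le i).
have z_le1 : z <= 1 by apply: le_trans (ltW bz_lt1); rewrite ler_peMl.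
have zW_le : z * hypwsum N <= hypwsum N.+1.
  by apply: le_trans hypwsumS; rewrite ler_piMl.
have rec := hypsum_recurrence N.
have : `|t * (hypsum N.+1 - b * z * hypsum N - 1)| <= ((1 - b * z) ^+ 2)^-1.
  have -> : hypsum N.+1 - b * z * hypsum N - 1
          = hypsum N.+1 - 1 - b * z * hypsum N by ring.
  rewrite rec ler_norml; have := mulr_ge0 z_ge0 hypwsum_ge0; lra.
by rewrite normrM gtr0_norm // mulrC -ler_pdivlMr // => h; rewrite invfM.
Qed.

Lemma hyp2F1_approx :
  `|hyp2F1 1 (b * t) (t + 1) z - (1 - b * z)^-1| <= ((1 - b * z) ^+ 3 * t)^-1.
Proof.
rewrite hyp2F1_1E; set F := limn hypsum; set c := ((1 - b * z) ^+ 2 * t)^-1.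
have step_cvg : (fun N => hypsum N.+1 - b * z * hypsum N - 1) @ \oo -->
                F - b * z * F - 1.
  apply: cvgB; last exact: cvg_cst.
  by apply: cvgB; [rewrite (cvg_shiftS hypsum)|apply: cvgM; [exact: cvg_cst|]];
    exact: hypsum_cvg.
have : `|F - b * z * F - 1| <= c.
  by apply: (cvgr_to_le (cvg_norm step_cvg)); apply: nearW; exact: hypsum_step_near.
have q'_gt0 : 0 < 1 - b * z by rewrite subr_gt0.
have -> : F - (1 - b * z)^-1 = (F - b * z * F - 1) / (1 - b * z) by field; rewrite gt_eqF.
have -> : ((1 - b * z) ^+ 3 * t)^-1 = c / (1 - b * z) by rewrite /c; field; rewrite !gt_eqF.
by rewrite normrM (gtr0_norm (x := (1 - b * z)^-1)) ?invr_gt0 // ler_pM2r ?invr_gt0.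
Qed.

End HypergeometricApprox.

Lemma hyp2F1_approx_le {R : realType} (b t z m : R) :
  0 < t -> 1 <= b -> 0 <= z -> 0 < m -> m <= 1 - b * z ->
  `|hyp2F1 1 (b * t) (t + 1) z - (1 - b * z)^-1| <= (m ^+ 3 * t)^-1.
Proof.
move=> t_gt0 b_ge1 z_ge0 m_gt0 m_le.
have factor_gt0 : 0 < 1 - b * z by apply: lt_le_trans m_le.
have bz_lt1 : b * z < 1 by rewrite -subr_gt0.
apply: le_trans (hyp2F1_approx _ _ _ t_gt0 b_ge1 z_ge0 bz_lt1) _.
rewrite lef_pV2 ?posrE ?mulr_gt0 ?exprn_gt0 // ler_pM2r //.
by rewrite lerXn2r ?nnegrE // ltW.
Qed.

Section HalfPlusMinus.
Context {R : realType}.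

Lemma prod_le_factors (u v : R) : 0 < u * v -> 0 < u + v <= 1 ->
  u * v <= u /\ u * v <= v.
Proof.
move=> uv_gt0 /andP[sum_gt0 sum_le1].
have u_gt0 : 0 < u by apply: contraTT uv_gt0; rewrite -!leNgt => u_le0; nra.
have v_gt0 : 0 < v by apply: contraTT uv_gt0; rewrite -!leNgt => v_le0; nra.
by split; nra.
Qed.

Variables x beta t : R.
Hypotheses (x_ge0 : 0 <= x) (x_lt1 : x < 1) (beta_gt0 : 0 < beta) (beta_lt1 : beta < 1).
Hypothesis t_gt0 : 0 < t.

Definition region_margin := (1 + beta) ^+ 2 * x / 4 - beta.
Hypothesis margin_gt0 : 0 < region_margin.

Let s : R := Num.sqrt (1 - x).
Let zm : R := 2^-1 - 2^-1 * s.
Let zp : R := 2^-1 + 2^-1 * s.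
Let um : R := 1 - (1 + beta) * zm.
Let up : R := 1 - (1 + beta) * zp.

Let s_gt0 : 0 < s. Proof. by rewrite sqrtr_gt0 subr_gt0. Qed.
Let sqr_s : s ^+ 2 = 1 - x. Proof. by rewrite sqr_sqrtr // subr_ge0 ltW. Qed.
Let s_le1 : s <= 1.
Proof. by rewrite /s -[leRHS]sqrtr1 ler_sqrt // gerBl. Qed.

Let up_mul_um : up * um = region_margin.
Proof. by rewrite /up /um /zp /zm /region_margin -[x](subKr 1) -sqr_s; field. Qed.

Let up_add_um : up + um = 1 - beta.
Proof. by rewrite /up /um /zp /zm; field. Qed.

Let um_sub_up : um - up = (1 + beta) * s.
Proof. by rewrite /up /um /zp /zm; field. Qed.

Lemma half_pm_factors_ge : region_margin <= up /\ region_margin <= um.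
Proof.
have uv_gt0 : 0 < up * um by rewrite up_mul_um.
have sum_range : 0 < up + um <= 1 by rewrite up_add_um subr_gt0 beta_lt1 gerBl ltW.
by rewrite -up_mul_um; apply: prod_le_factors.
Qed.

Lemma half_pm_limitE :
  beta / ((1 + beta) * s) * (um^-1 - up^-1)
  = - 1 / ((1 + beta) ^+ 2 / (4 * beta) * x - 1).
Proof.
have [up_ge um_ge] := half_pm_factors_ge.
have up_neq0 : up != 0 by rewrite gt_eqF // (lt_le_trans margin_gt0).
have um_neq0 : um != 0 by rewrite gt_eqF // (lt_le_trans margin_gt0).
have -> : um^-1 - up^-1 = - ((um - up) / (up * um)) by field; rewrite up_neq0 um_neq0.
have -> : (1 + beta) ^+ 2 / (4 * beta) * x - 1 = region_margin / beta.
  by rewrite /region_margin; field; rewrite gt_eqF.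
rewrite um_sub_up up_mul_um; field.
by rewrite !gt_eqF // ?addr_gt0.
Qed.

Lemma hyp2F1_half_pm_approx :
  `| beta / ((1 + beta) * s) *
       (hyp2F1 1 ((1 + beta) * t) (t + 1) zm - hyp2F1 1 ((1 + beta) * t) (t + 1) zp)
     - (- 1 / ((1 + beta) ^+ 2 / (4 * beta) * x - 1)) |
  <= 2 / ((1 - x) * region_margin ^+ 3 * t).
Proof.
have [up_ge um_ge] := half_pm_factors_ge.
have b_ge1 : 1 <= 1 + beta by rewrite lerDl ltW.
have zm_ge0 : 0 <= zm by rewrite subr_ge0 ler_piMr.
have zp_ge0 : 0 <= zp by rewrite addr_ge0 ?mulr_ge0 ?invr_ge0 ?ltW.
have coef_ge0 : 0 <= beta / ((1 + beta) * s) by rewrite ltW // divr_gt0 ?mulr_gt0 ?addr_gt0.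
have coef_le : beta / ((1 + beta) * s) <= (1 - x)^-1.
  have s_inv_ge1 : 1 <= s^-1 by rewrite invf_ge1.
  have -> : (1 - x)^-1 = s^-1 * s^-1 by rewrite -sqr_s expr2 invfM.
  rewrite invfM mulrA ler_pM // ?invr_ge0 ?divr_ge0 ?addr_ge0 ?(ltW s_gt0) ?(ltW beta_gt0) //.
  by apply: le_trans s_inv_ge1; rewrite ler_pdivrMr ?addr_gt0 // mul1r lerDr.
rewrite -half_pm_limitE.
have -> : forall Fm Fp : R, beta / ((1 + beta) * s) * (Fm - Fp)
    - beta / ((1 + beta) * s) * (um^-1 - up^-1)
    = beta / ((1 + beta) * s) * ((Fm - um^-1) - (Fp - up^-1)) by move=> *; ring.
have one_sub_x_gt0 : 0 < 1 - x by rewrite subr_gt0.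
have -> : 2 / ((1 - x) * region_margin ^+ 3 * t)
    = (1 - x)^-1 * ((region_margin ^+ 3 * t)^-1 + (region_margin ^+ 3 * t)^-1).
  by field; rewrite !gt_eqF.
rewrite normrM ger0_norm // ler_pM //.
by apply: le_trans (ler_normB _ _) _; rewrite lerD ?hyp2F1_approx_le.
Qed.

End HalfPlusMinus.

Lemma region_margin_gt0 {R : realType} (x beta : R) : 0 < beta ->
  1 < (1 + beta) ^+ 2 * x / (4 * beta) -> 0 < region_margin x beta.
Proof.
move=> beta_gt0; rewrite ltr_pdivlMr ?mulr_gt0 // mul1r /region_margin subr_gt0.
by rewrite ltr_pdivlMr // mulrC.
Qed.

Lemma region_margin_continuous {R : realType} :
  continuous (fun p : R * R => region_margin p.1 p.2).
Proof.
move=> p; apply: cvgB; last exact: cvg_snd.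
apply: cvgM; last exact: cvg_cst; apply: cvgM; last exact: cvg_fst.
by rewrite expr2; apply: cvgM; (apply: cvgD; [exact: cvg_cst|exact: cvg_snd]).
Qed.

Lemma compact_gt0_lbound {T : topologicalType} {R : realType} (K : set T)
    (f : T -> R) :
  compact K -> continuous f -> (forall p, K p -> 0 < f p) ->
  exists2 m, 0 < m & forall p, K p -> m <= f p.
Proof.
move=> cK cf f_gt0; have [->|/set0P [p0 Kp0]] := eqVneq K set0.
  by exists 1.
have [c Kc c_min] := compact_EVT_min (ex_intro _ p0 Kp0) cK (continuous_subspaceT cf).
by exists (f c); [apply: f_gt0; rewrite -inE|move=> p Kp; apply: c_min; rewrite inE].
Qed.

Theorem corollary2 (R : realType) (K : set (R * R)) :
  compact K ->
  K `<=` [set p | 0 <= p.1 < 1 /\ 0 < p.2 < 1 /\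
                  1 < (1 + p.2) ^+ 2 * p.1 / (4 * p.2)] ->
  forall eps : R, 0 < eps ->
  exists T : R, forall t : R, T < t -> forall p, K p ->
    let x := p.1 in let beta := p.2 in
    `| beta / ((1 + beta) * Num.sqrt (1 - x)) *
         (hyp2F1 1 ((1 + beta) * t) (t + 1) (2^-1 - 2^-1 * Num.sqrt (1 - x))
          - hyp2F1 1 ((1 + beta) * t) (t + 1) (2^-1 + 2^-1 * Num.sqrt (1 - x)))
       - (- 1 / ((1 + beta) ^+ 2 / (4 * beta) * x - 1)) | < eps.
Proof.
move=> cK sub eps eps_gt0.
have cont_fst : continuous (fun p : R * R => 1 - p.1).
  by move=> p; apply: cvgB; [exact: cvg_cst|exact: cvg_fst].
have [m1 m1_gt0 m1_le] : exists2 m : R, 0 < m & forall p, K p -> m <= 1 - p.1.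
  by apply: compact_gt0_lbound => // p /sub[/andP[_ x_lt1] _]; rewrite subr_gt0.
have [m2 m2_gt0 m2_le] : exists2 m : R, 0 < m & forall p, K p -> m <= region_margin p.1 p.2.
  apply: compact_gt0_lbound => //; first exact: region_margin_continuous.
  by move=> p /sub[_ [/andP[beta_gt0 _]]]; apply: region_margin_gt0.
have m_gt0 : 0 < m1 * m2 ^+ 3 by rewrite mulr_gt0 ?exprn_gt0.
exists (2 / (m1 * m2 ^+ 3 * eps)) => t tT p Kp /=.
have t_gt0 : 0 < t by apply: lt_trans tT; rewrite divr_gt0 ?mulr_gt0.
have [/andP[x_ge0 x_lt1] [/andP[beta_gt0 beta_lt1] _]] := sub p Kp.
have margin_gt0 := lt_le_trans m2_gt0 (m2_le p Kp).
apply: le_lt_trans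
  (hyp2F1_half_pm_approx _ _ _ x_ge0 x_lt1 beta_gt0 beta_lt1 t_gt0 margin_gt0) _.
have denom_le : m1 * m2 ^+ 3 * t <= (1 - p.1) * region_margin p.1 p.2 ^+ 3 * t.
  rewrite ler_pM2r // ler_pM ?(ltW m1_gt0) ?exprn_ge0 ?(ltW m2_gt0) ?m1_le //.
  by rewrite lerXn2r ?nnegrE ?(ltW m2_gt0) ?(ltW margin_gt0) ?m2_le.
apply: le_lt_trans (_ : 2 / (m1 * m2 ^+ 3 * t) < eps).
  by rewrite ler_pM2l // lef_pV2 ?posrE ?mulr_gt0 ?exprn_gt0 // subr_gt0.
rewrite ltr_pdivrMr ?mulr_gt0 // in tT; rewrite ltr_pdivrMr ?mulr_gt0 //.
by rewrite (_ : eps * _ = t * (m1 * m2 ^+ 3 * eps)) //; ring.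
Qed.
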